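(* Let $\mathcal{M}=(E,\mathcal{C})$ be a loopless oriented matroid with $E=\{e_1,\dots,e_m\}$ ordered $e_1\prec\cdots\prec e_m$, and let $1\le k\le m$. The map $\psi_k:\mathscr{N}_{k-1}\to\mathscr{N}_k$ is injective.
   Context: A signed subset of a finite set $E$ is a pair $X=(X^+,X^-)$ of disjoint subsets; support $\underline{X}=X^+\cup X^-$, $-X=(X^-,X^+)$. An oriented matroid $\mathcal{M}=(E,\mathcal{C})$: a collection $\mathcal{C}$ of signed subsets with (C1) empty signed set not in $\mathcal{C}$; (C2) $\mathcal{C}=-\mathcal{C}$; (C3) $\underline{X}\subseteq\underline{Y}$ for $X,Y\in\mathcal{C}$ implies $X=\pm Y$; (C4) for $X,Y\in\mathcal{C}$, $X\neq\pm Y$, $e\in X^+\cap Y^-$ there is $Z\in\mathcal{C}$ with $Z^+\subseteq X^+\cup Y^+-\{e\}$, $Z^-\subseteq X^-\cup Y^--\{e\}$. Underlying matroid $\underline{\mathcal{M}}$: circuits $\underline{X}$, $X\in\mathcal{C}$; loopless means no one-element circuit. Positive circuit: $X^-=\emptyset$; acyclic: no positive circuit. Reorientation ${}_{-A}\mathcal{M}$ ($A\subseteq E$): signed circuits ${}_{-A}X=((X^+-A)\cup(X^-\cap A),(X^--A)\cup(X^+\cap A))$; ${}_{-e}={}_{-\{e\}}$. Deletion $\mathcal{M}\backslash X$ on $E-X$: signed circuits $Y\in\mathcal{C}$ with $\underline{Y}\subseteq E-X$. Contraction $\mathcal{M}/X$ on $E-X$: support-minimal nonempty members of $\{(Y^+-X,Y^--X):Y\in\mathcal{C},\underline{Y}-X\ne\emptyset\}$.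 Broken circuit: circuit of $\underline{\mathcal{M}}$ minus its $\prec$-maximal element; $\mathrm{NBC}(\underline{\mathcal{M}})$: subsets of $E$ containing no broken circuit. $E_k=\{e_1,\dots,e_k\}$; for $N_k\subseteq E_k$, $N_k^c=E_k-N_k$. $\mathscr{N}_k$ is the set of pairs $(N_k,A_k)$ with $N_k\subseteq E_k$, $A_k\subseteq E-E_k$, $N_k\in\mathrm{NBC}(\underline{\mathcal{M}})$, and $\mathcal{M}_k:={}_{-A_k}(\mathcal{M}\backslash N_k^c/N_k)$ acyclic. For $(N_{k-1},A_{k-1})\in\mathscr{N}_{k-1}$ with $\mathcal{M}_{k-1}={}_{-A_{k-1}}(\mathcal{M}\backslash N_{k-1}^c/N_{k-1})$: $\psi_k(N_{k-1},A_{k-1})=(N_{k-1}\cup\{e_k\},A_{k-1})$ if $e_k\notin A_{k-1}$ and ${}_{-e_k}\mathcal{M}_{k-1}$ is acyclic; $=(N_{k-1},A_{k-1})$ if $e_k\notin A_{k-1}$ and ${}_{-e_k}\mathcal{M}_{k-1}$ is not acyclic; $=(N_{k-1},A_{k-1}-\{e_k\})$ if $e_k\in A_{k-1}$. *)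

(* Ground set E = {e_1,...,e_m} is modelled by 'I_m, with
   e_{i+1} the ordinal i, and e_1 < ... < e_m the natural order of 'I_m. *)
From mathcomp Require Import all_boot.
Set Implicit Arguments. Unset Strict Implicit. Unset Printing Implicit Defensive.

Section OM.
Variable m : nat.

(* A signed subset (X^+, X^-); disjointness is required of circuits in [OM]. *)
Definition sgn := ({set 'I_m} * {set 'I_m})%type.

Definition supp (X : sgn) : {set 'I_m} := X.1 :|: X.2.
Definition negs (X : sgn) : sgn := (X.2, X.1).

Definition OM (C : {set sgn}) : Prop :=
  [/\ (forall X, X \in C -> [disjoint X.1 & X.2]),
      (set0, set0) \notin C,
      (forall X, X \in C -> negs X \in C),
      (forall X Y, X \in C -> Y \in C -> supp X \subset supp Y ->
          X = Y \/ X = negs Y) &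
      (forall X Y e, X \in C -> Y \in C -> X <> Y -> X <> negs Y ->
          e \in X.1 :&: Y.2 ->
          exists2 Z, Z \in C &
            Z.1 \subset (X.1 :|: Y.1) :\ e /\ Z.2 \subset (X.2 :|: Y.2) :\ e)].

Definition loopless (C : {set sgn}) : Prop :=
  forall X, X \in C -> #|supp X| != 1.

Definition acyclic (C : {set sgn}) : bool :=
  [forall X in C, X.2 != set0].

Definition reor (A : {set 'I_m}) (X : sgn) : sgn :=
  ((X.1 :\: A) :|: (X.2 :&: A), (X.2 :\: A) :|: (X.1 :&: A)).
Definition reorient (A : {set 'I_m}) (C : {set sgn}) : {set sgn} :=
  [set reor A X | X in C].

Definition delete (C : {set sgn}) (X : {set 'I_m}) : {set sgn} :=
  [set Y in C | supp Y \subset ~: X].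

Definition contr_cands (C : {set sgn}) (X : {set 'I_m}) : {set sgn} :=
  [set ((Y.1 :\: X), (Y.2 :\: X)) | Y in C & supp Y :\: X != set0].
Definition contract (C : {set sgn}) (X : {set 'I_m}) : {set sgn} :=
  [set Z in contr_cands C X |
     [forall W in contr_cands C X, ~~ (supp W \proper supp Z)]].

Definition has_bc (C : {set sgn}) (N : {set 'I_m}) : bool :=
  [exists X in C, exists e in supp X,
     [forall j in supp X, j <= e] && (supp X :\ e \subset N)].
Definition nbc (C : {set sgn}) (N : {set 'I_m}) : bool := ~~ has_bc C N.

Definition Ek (k : nat) : {set 'I_m} := [set i : 'I_m | i < k].

Definition minorN (C : {set sgn}) (k : nat) (N : {set 'I_m}) : {set sgn} :=
  contract (delete C (Ek k :\: N)) N.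

Definition Mk (C : {set sgn}) (k : nat) (p : {set 'I_m} * {set 'I_m}) :
  {set sgn} := reorient p.2 (minorN C k p.1).

Definition scrN (C : {set sgn}) (k : nat) : {set {set 'I_m} * {set 'I_m}} :=
  [set p : {set 'I_m} * {set 'I_m} | [&& p.1 \subset Ek k, p.2 \subset ~: Ek k, nbc C p.1 &
              acyclic (Mk C k p)]].

(* psi_k, where e = e_k (so e is the ordinal k-1) *)
Definition psi (C : {set sgn}) (k : nat) (e : 'I_m)
    (p : {set 'I_m} * {set 'I_m}) : {set 'I_m} * {set 'I_m} :=
  if e \notin p.2 then
    (if acyclic (reorient [set e] (Mk C k.-1 p)) then (e |: p.1, p.2)
     else p)
  else (p.1, p.2 :\ e).

End OM.

(* The three branches of psi_k are told apart by their output (N, A):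
   the first adds e_k to N, which it did not contain; the third returns a
   pair that e_k-reorients to the acyclic input; the second returns an input
   whose e_k-reorientation is not acyclic.  Hence psi_k has a left inverse on
   scrN_(k-1); none of the oriented-matroid axioms is needed for this. *)
From mathcomp Require Import all_boot.

Set Implicit Arguments.
Unset Strict Implicit.
Unset Printing Implicit Defensive.

Lemma reorU m (A B : {set 'I_m}) (X : sgn m) : [disjoint A & B] ->
  reor B (reor A X) = reor (A :|: B) X.
Proof.
move=> dAB; rewrite /reor /=; congr pair; apply/setP => x; rewrite !inE.
all: case: (boolP (x \in A)) => [xA|_]; first rewrite (disjointFr dAB xA).
all: by case: (x \in X.1); case: (x \in X.2); case: (x \in B).
Qed.

Lemma reorientU m (A B : {set 'I_m}) (C : {set sgn m}) : [disjoint A & B] ->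
  reorient B (reorient A C) = reorient (A :|: B) C.
Proof.
move=> dAB; rewrite /reorient -imset_comp; apply: eq_imset => X /=.
exact: reorU.
Qed.

Section PsiInverse.
Variables (m : nat) (C : {set sgn m}) (k : nat) (e : 'I_m).
Hypothesis e_notin_Ek : e \notin Ek m k.-1.

Lemma reorient1_Mk_setD1 (N A : {set 'I_m}) : e \in A ->
  reorient [set e] (Mk C k.-1 (N, A :\ e)) = Mk C k.-1 (N, A).
Proof.
move=> eA; rewrite /Mk /= reorientU.
  by rewrite setUC setD1K.
by rewrite disjoint_sym disjoints1 setD11.
Qed.

Definition psi_inv (q : {set 'I_m} * {set 'I_m}) : {set 'I_m} * {set 'I_m} :=
  if e \in q.1 then (q.1 :\ e, q.2)
  else if acyclic (reorient [set e] (Mk C k.-1 q)) then (q.1, e |: q.2)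
  else q.

Lemma psiK : {in scrN C k.-1, cancel (psi C k e) psi_inv}.
Proof.
move=> [N A]; rewrite inE /= => /and4P [NE _ _ acyclicM].
have eN : e \notin N by apply: contra e_notin_Ek; apply: (subsetP NE).
rewrite /psi /psi_inv /=; case: (boolP (e \in A)) => [eA|_] /=.
  by rewrite ifN // reorient1_Mk_setD1 // acyclicM setD1K.
case: (boolP (acyclic (reorient [set e] (Mk C k.-1 (N, A))))) => [_|cyclic_e] /=.
  by rewrite setU11 setU1K.
by rewrite ifN // (negbTE cyclic_e).
Qed.

End PsiInverse.

Theorem lemma2p4 (m : nat) (C : {set sgn m}) (k : nat) (e : 'I_m) :
  OM C -> loopless C -> (e : nat).+1 = k ->
  {in scrN C k.-1 &, injective (psi C k e)}.
Proof.
move=> _ _ ek; apply: can_in_inj (psiK _).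
by rewrite inE -ek ltnn.
Qed.
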